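(* Let $G$ be a group with finite generating set $S$. If the Cayley graph $Cay(G,S)$ is $\delta$-hyperbolic, then $G$ is $[4\delta+2,\,4\delta+3]$-chordal with respect to $S$.
   Context: $S^{\pm1}=S\cup S^{-1}\setminus\{e\}$; $Cay(G,S)$ has vertex set $G$, edges $\{g,gs\}$ ($s\in S^{\pm1}$), each edge isometric to $[0,1]$, with the path-length metric. A geodesic metric space is $\delta$-hyperbolic if every geodesic triangle is $\delta$-thin: each side lies in the closed $\delta$-neighborhood of the union of the other two sides. A relation $s_1\cdots s_n=e$ with $n>2$, $s_i\in S^{\pm1}$, is simple if $s_p\cdots s_q=e$ holds exactly when $(p,q)=(1,n)$. $G$ is $[i_0,k]$-chordal with respect to $S$ if for every simple relation $s_1\cdots s_n=e$ with $n\ge k$ there exist $1\le i\le i_0$, $i<j\le n$ and $s'_1,\dots,s'_r\in S^{\pm1}$ with $s_i\cdots s_j=s'_1\cdots s'_r$ and $r\le\min\{j-i,\,n-j+i-2\}$. *)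

From Stdlib Require Import Reals List Arith.
Open Scope R_scope.

Record group := Group {
  carrier :> Type;
  gmul : carrier -> carrier -> carrier;
  ginv : carrier -> carrier;
  gone : carrier;
  gmulA : forall x y z, gmul x (gmul y z) = gmul (gmul x y) z;
  gmul1l : forall x, gmul gone x = x;
  gmul1r : forall x, gmul x gone = x;
  gmulVl : forall x, gmul (ginv x) x = gone;
  gmulVr : forall x, gmul x (ginv x) = gone
}.

Section Cayley.
Variable G : group.
Variable S : list G.

Definition gprod (l : list G) : G := fold_right (gmul G) (gone G) l.

Definition Spm (s : G) : Prop := (In s S \/ In (ginv G s) S) /\ s <> gone G.

Definition generates : Prop :=
  forall g : G, exists l : list G,
    Forall (fun s => In s S \/ In (ginv G s) S) l /\ gprod l = g.

Definition wdist (x y : G) (n : nat) : Prop :=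
  (exists l, length l = n /\ Forall Spm l /\ gmul G x (gprod l) = y) /\
  (forall l, Forall Spm l -> gmul G x (gprod l) = y -> (n <= length l)%nat).

(* Points of the metric Cayley graph: a vertex, or an interior point of the
   edge {a,b} (with a^{-1} b in S^{+-1}) at distance t from a, 0<t<1.  The
   interior point E a b t is the same point as E b a (1-t). *)
Inductive pt := V (g : G) | E (a b : G) (t : R).

Definition valid (p : pt) : Prop :=
  match p with
  | V _ => True
  | E a b t => Spm (gmul G (ginv G a) b) /\ 0 < t < 1
  end.

(* x is an endpoint of the (closed) cell carrying p, at distance al from p
   along that cell *)
Definition endp (p : pt) (x : G) (al : R) : Prop :=
  match p with
  | V g => x = g /\ al = 0
  | E a b t => (x = a /\ al = t) \/ (x = b /\ al = 1 - t)
  end.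

(* candidate path lengths from p to q: inside a common edge, or
   p -> endpoint x -> geodesic vertex path -> endpoint y -> q *)
Definition cand (p q : pt) (c : R) : Prop :=
  (exists a b t a' b' u, p = E a b t /\ q = E a' b' u /\
     ((a = a' /\ b = b' /\ c = Rabs (t - u)) \/
      (a = b' /\ b = a' /\ c = Rabs (t - (1 - u))))) \/
  (exists x al y be n, endp p x al /\ endp q y be /\ wdist x y n /\
     c = al + INR n + be).

(* path-length metric of the Cayley graph (unit edges): pdist p q r means
   d(p,q) = r (the shortest of the finitely many candidate lengths) *)
Definition pdist (p q : pt) (r : R) : Prop :=
  cand p q r /\ forall c, cand p q c -> r <= c.

Definition geodesic (gam : R -> pt) (L : R) (p q : pt) : Prop :=
  0 <= L /\
  (forall s, 0 <= s <= L -> valid (gam s)) /\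
  pdist (gam 0) p 0 /\ pdist (gam L) q 0 /\
  (forall s s', 0 <= s <= L -> 0 <= s' <= L ->
     pdist (gam s) (gam s') (Rabs (s - s'))).

Definition side_thin (delta : R) (g1 : R -> pt) (L1 : R)
    (g2 : R -> pt) (L2 : R) (g3 : R -> pt) (L3 : R) : Prop :=
  forall s, 0 <= s <= L1 ->
    (exists s', 0 <= s' <= L2 /\ exists r, pdist (g1 s) (g2 s') r /\ r <= delta) \/
    (exists s', 0 <= s' <= L3 /\ exists r, pdist (g1 s) (g3 s') r /\ r <= delta).

Definition hyperbolic (delta : R) : Prop :=
  forall (x y z : pt) (g1 g2 g3 : R -> pt) (L1 L2 L3 : R),
    valid x -> valid y -> valid z ->
    geodesic g1 L1 x y -> geodesic g2 L2 y z -> geodesic g3 L3 z x ->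
    side_thin delta g1 L1 g2 L2 g3 L3 /\
    side_thin delta g2 L2 g3 L3 g1 L1 /\
    side_thin delta g3 L3 g1 L1 g2 L2.

(* s_p ... s_q for 1 <= p <= q <= length l (1-based indices) *)
Definition seg (l : list G) (p q : nat) : list G :=
  firstn (q - p + 1) (skipn (p - 1) l).

Definition simple_rel (l : list G) : Prop :=
  (2 < length l)%nat /\ Forall Spm l /\ gprod l = gone G /\
  forall p q, (1 <= p)%nat -> (p <= q)%nat -> (q <= length l)%nat ->
    (gprod (seg l p q) = gone G <-> (p = 1%nat /\ q = length l)).

Definition chordal (i0 k : R) : Prop :=
  forall l : list G, simple_rel l -> k <= INR (length l) ->
    exists i j : nat,
      (1 <= i)%nat /\ INR i <= i0 /\ (i < j)%nat /\ (j <= length l)%nat /\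
      exists l' : list G, Forall Spm l' /\
        gprod (seg l i j) = gprod l' /\
        (* r <= min (j - i, n - j + i - 2) *)
        (length l' + i <= j)%nat /\ (length l' + 2 + j <= length l + i)%nat.

End Cayley.

From Stdlib Require Import Reals List Lia Lra ZArith Classical.
Open Scope R_scope.

(* A simple relation s_1 ... s_n = e traces a cycle of length n in the Cayley
   graph, through the vertices v_k = s_1 ... s_k.  Suppose no chord starts at
   one of the first m + 1 letters, where m > 2 delta and 2m < n.  A path from
   v_x (x <= m) to v_y shorter than both arcs of the cycle between them would
   be such a chord, so these word distances are distances along the cycle.
   Prolonging a path between two vertices of an arc of length at most n/2 back
   to the start v_x of the arc (x <= m), or forward to its end v_n = v_0, shows
   that such an arc is a geodesic.  The arcs [0, m], [m, n/2] and [n/2, n]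
   thus form a geodesic triangle in which the midpoint of the first side is at
   distance m/2 > delta from the two others, contradicting delta-thinness.
   With m = floor(2 delta) + 1 the chord starts at i <= 2 delta + 2, which is
   at most 4 delta + 2. *)

Section GroupFacts.
Context {G : group}.

Lemma gmul_cancel_l (x a b : G) : gmul G x a = gmul G x b -> a = b.
Proof.
  intro H.
  rewrite <- (gmul1l G a), <- (gmul1l G b), <- (gmulVl G x), <- !gmulA, H.
  reflexivity.
Qed.

Lemma ginv_unique (x y : G) : gmul G x y = gone G -> y = ginv G x.
Proof. intro H. apply (gmul_cancel_l x). rewrite H, gmulVr. reflexivity. Qed.

Lemma ginv_involutive (x : G) : ginv G (ginv G x) = x.
Proof. symmetry. apply ginv_unique, gmulVl. Qed.

Lemma ginv_one : ginv G (gone G) = gone G.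
Proof. symmetry. apply ginv_unique, gmul1l. Qed.

Lemma ginv_mul (x y : G) : ginv G (gmul G x y) = gmul G (ginv G y) (ginv G x).
Proof.
  symmetry. apply ginv_unique.
  rewrite !gmulA, <- (gmulA G x y), gmulVr, gmul1r, gmulVr. reflexivity.
Qed.

Lemma gprod_app (l1 l2 : list G) :
  gprod G (l1 ++ l2) = gmul G (gprod G l1) (gprod G l2).
Proof.
  induction l1 as [|a l1 IH]; simpl.
  - rewrite gmul1l. reflexivity.
  - unfold gprod in *. simpl. rewrite IH, gmulA. reflexivity.
Qed.

Definition winv (l : list G) : list G := rev (map (ginv G) l).

Lemma length_winv (l : list G) : length (winv l) = length l.
Proof. unfold winv. rewrite length_rev, length_map. reflexivity. Qed.

Lemma gprod_winv (l : list G) : gprod G (winv l) = ginv G (gprod G l).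
Proof.
  induction l as [|a l IH]; unfold winv in *; simpl.
  - rewrite ginv_one. reflexivity.
  - rewrite gprod_app, IH, ginv_mul. unfold gprod at 2. simpl. rewrite gmul1r. reflexivity.
Qed.

Lemma gmul_winv (x y : G) (l : list G) :
  gmul G x (gprod G l) = y -> gmul G y (gprod G (winv l)) = x.
Proof. intros <-. rewrite gprod_winv, <- gmulA, gmulVr, gmul1r. reflexivity. Qed.

End GroupFacts.

Section CayleyGraph.
Context {G : group} (gens : list G).

Lemma Spm_ginv (s : G) : Spm G gens s -> Spm G gens (ginv G s).
Proof.
  intros [Hs Hne]. split.
  - rewrite ginv_involutive. tauto.
  - intro E. apply Hne. rewrite <- (ginv_involutive s), E, ginv_one. reflexivity.
Qed.

Lemma Forall_Spm_winv (l : list G) :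
  Forall (Spm G gens) l -> Forall (Spm G gens) (winv l).
Proof.
  intro H. apply Forall_rev, Forall_map.
  eapply Forall_impl; [exact Spm_ginv | exact H].
Qed.

Lemma wdist_sym (x y : G) (d : nat) : wdist G gens x y d -> wdist G gens y x d.
Proof.
  intros [(l & Hlen & Hl & Hxy) Hmin]. split.
  - exists (winv l). rewrite length_winv.
    auto using Forall_Spm_winv, gmul_winv.
  - intros l' Hl' Hyx. rewrite <- length_winv.
    auto using Forall_Spm_winv, gmul_winv.
Qed.

Lemma wdist_refl (x : G) : wdist G gens x x 0.
Proof.
  split.
  - exists nil. repeat split; auto. apply gmul1r.
  - intros. lia.
Qed.

Lemma cand_sym (p q : pt G) (c : R) : cand G gens p q c -> cand G gens q p c.
Proof.
  intros [(a & b & t & a' & b' & u & -> & -> & H) | (x & al & y & be & d & Hx & Hy & Hd & ->)].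
  - left. exists a', b', u, a, b, t. do 2 (split; [reflexivity|]).
    destruct H as [(-> & -> & ->) | (-> & -> & ->)].
    + left. rewrite Rabs_minus_sym. auto.
    + right. repeat split. f_equal. unfold Rabs. repeat destruct Rcase_abs; lra.
  - right. exists y, be, x, al, d.
    split; [exact Hy|]. split; [exact Hx|]. split; [apply wdist_sym, Hd | ring].
Qed.

Lemma pdist_V_refl (x : G) : pdist G gens (V G x) (V G x) 0.
Proof.
  split.
  - right. exists x, 0, x, 0, 0%nat.
    split; [now split|]. split; [now split|]. split; [apply wdist_refl | simpl; ring].
  - intros c [(a & b & t & a' & b' & u & H & _)
              | (x' & al & y & be & d & [_ ->] & [_ ->] & _ & ->)].
    + discriminate.
    + pose proof (pos_INR d). lra.
Qed.

End CayleyGraph.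

Definition nfloor (s : R) : nat := Z.to_nat (Int_part s).

Lemma nfloor_spec (s : R) : 0 <= s -> INR (nfloor s) <= s < INR (nfloor s) + 1.
Proof.
  intro Hs. destruct (base_Int_part s) as [H1 H2].
  assert (Hz : (0 <= Int_part s)%Z).
  { assert (IZR (-1) < IZR (Int_part s)) by (simpl; lra). apply lt_IZR in H. lia. }
  unfold nfloor. rewrite INR_IZR_INZ, Z2Nat.id by exact Hz. lra.
Qed.

Lemma nfloor_unique (s : R) (k : nat) : INR k <= s < INR k + 1 -> nfloor s = k.
Proof.
  intros Hk. pose proof (pos_INR k). destruct (nfloor_spec s ltac:(lra)).
  destruct (Nat.lt_trichotomy (nfloor s) k) as [Hlt | [Heq | Hlt]]; auto;
    apply le_INR in Hlt; rewrite S_INR in Hlt; lra.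
Qed.

Section Walks.
Context {G : group}.

Definition walk (w : nat -> G) (s : R) : pt G :=
  if Req_EM_T s (INR (nfloor s)) then V G (w (nfloor s))
  else E G (w (nfloor s)) (w (S (nfloor s))) (s - INR (nfloor s)).

Lemma walk_INR (w : nat -> G) (k : nat) : walk w (INR k) = V G (w k).
Proof.
  unfold walk. rewrite (nfloor_unique (INR k) k) by lra.
  destruct Req_EM_T; [reflexivity | lra].
Qed.

Lemma walk_cases (w : nat -> G) (s : R) : 0 <= s ->
  (s = INR (nfloor s) /\ walk w s = V G (w (nfloor s))) \/
  (INR (nfloor s) < s < INR (nfloor s) + 1 /\
   walk w s = E G (w (nfloor s)) (w (S (nfloor s))) (s - INR (nfloor s))).
Proof.
  intro Hs. pose proof (nfloor_spec s Hs). unfold walk.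
  destruct Req_EM_T; [left | right]; split; auto; lra.
Qed.

Lemma walk_in_edge (w : nat -> G) (k : nat) (s : R) :
  INR k < s < INR k + 1 -> walk w s = E G (w k) (w (S k)) (s - INR k).
Proof.
  intro Hs. unfold walk. rewrite (nfloor_unique s k) by lra.
  destruct Req_EM_T; [lra | reflexivity].
Qed.

Lemma endp_walk_floor (w : nat -> G) (s : R) :
  0 <= s -> endp G (walk w s) (w (nfloor s)) (s - INR (nfloor s)).
Proof.
  intro Hs. destruct (walk_cases w s Hs) as [[Hv ->] | [_ ->]]; simpl.
  - split; [reflexivity | lra].
  - left. auto.
Qed.

Lemma endp_walk_ceil (w : nat -> G) (s : R) : 0 <= s ->
  exists i, s <= INR i < s + 1 /\ endp G (walk w s) (w i) (INR i - s).
Proof.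
  intro Hs. pose proof (nfloor_spec s Hs).
  destruct (walk_cases w s Hs) as [[Hv ->] | [He ->]]; simpl.
  - exists (nfloor s). repeat split; [lra | lra | lra].
  - exists (S (nfloor s)). rewrite S_INR. split; [lra|].
    right. split; [reflexivity | ring].
Qed.

Lemma endp_walk (w : nat -> G) (L : nat) (s : R) (x : G) (al : R) :
  0 <= s <= INR L -> endp G (walk w s) x al ->
  exists i, (i <= L)%nat /\ x = w i /\ al = Rabs (s - INR i).
Proof.
  intros Hs Hx. pose proof (nfloor_spec s (proj1 Hs)) as Hfl.
  assert (HL : (nfloor s <= L)%nat) by (apply INR_le; lra).
  destruct (walk_cases w s (proj1 Hs)) as [[Hv Hw] | [He Hw]];
    rewrite Hw in Hx; simpl in Hx.
  - destruct Hx as [-> ->]. exists (nfloor s). split; [exact HL|].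
    split; [reflexivity|]. rewrite <- Hv, Rminus_diag, Rabs_R0. reflexivity.
  - assert (HL' : (nfloor s < L)%nat) by (apply INR_lt; lra).
    destruct Hx as [[-> ->] | [-> ->]].
    + exists (nfloor s). split; [exact HL|]. split; [reflexivity|].
      rewrite Rabs_right; lra.
    + exists (S (nfloor s)). split; [exact HL'|]. split; [reflexivity|].
      rewrite S_INR, Rabs_left; lra.
Qed.

Context (gens : list G).

Lemma cand_walk_inv (w w' : nat -> G) (L L' : nat) (s s' c : R) :
  0 <= s <= INR L -> 0 <= s' <= INR L' -> cand G gens (walk w s) (walk w' s') c ->
  (exists k k', (k < L)%nat /\ (k' < L')%nat /\
     INR k < s < INR k + 1 /\ INR k' < s' < INR k' + 1 /\
     ((w k = w' k' /\ w (S k) = w' (S k') /\ c = Rabs (s - INR k - (s' - INR k'))) \/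
      (w k = w' (S k') /\ w (S k) = w' k'))) \/
  (exists i j d, (i <= L)%nat /\ (j <= L')%nat /\ wdist G gens (w i) (w' j) d /\
     c = Rabs (s - INR i) + INR d + Rabs (s' - INR j)).
Proof.
  intros Hs Hs'
    [(a & b & t & a' & b' & u & Hp & Hq & Hedge) | (x & al & y & be & d & Hx & Hy & Hd & ->)].
  - left.
    destruct (walk_cases w s (proj1 Hs)) as [[_ Hw] | [He Hw]];
      rewrite Hw in Hp; [discriminate|].
    destruct (walk_cases w' s' (proj1 Hs')) as [[_ Hw'] | [He' Hw']];
      rewrite Hw' in Hq; [discriminate|].
    injection Hp as <- <- <-. injection Hq as <- <- <-.
    exists (nfloor s), (nfloor s').
    split; [apply INR_lt; lra|]. split; [apply INR_lt; lra|].
    do 2 (split; [assumption|]).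
    destruct Hedge as [(-> & -> & ->) | (-> & -> & _)]; [left | right]; auto.
  - right.
    destruct (endp_walk w L s x al Hs Hx) as (i & Hi & -> & ->).
    destruct (endp_walk w' L' s' y be Hs' Hy) as (j & Hj & -> & ->).
    exists i, j, d. auto.
Qed.

End Walks.

Section WalkGeodesic.
Context {G : group} (gens : list G) (w : nat -> G) (L : nat).
Hypothesis walk_adjacent :
  forall k, (k < L)%nat -> Spm G gens (gmul G (ginv G (w k)) (w (S k))).
Hypothesis walk_wdist :
  forall a b, (a <= b <= L)%nat -> wdist G gens (w a) (w b) (b - a).

Lemma walk_vertex_dist_lower (i j d : nat) : (i <= L)%nat -> (j <= L)%nat ->
  wdist G gens (w i) (w j) d -> Rabs (INR i - INR j) <= INR d.
Proof.
  assert (Hle : forall i j d, (i <= j <= L)%nat ->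
            wdist G gens (w i) (w j) d -> INR j - INR i <= INR d).
  { intros i' j' d' Hij [(l & <- & Hl & Hw) _].
    destruct (walk_wdist i' j' Hij) as [_ Hmin].
    rewrite <- minus_INR by lia. apply le_INR, Hmin; assumption. }
  intros Hi Hj Hd. destruct (Nat.le_ge_cases i j) as [Hij | Hji].
  - rewrite Rabs_minus_sym, Rabs_right by (apply Rge_minus, Rle_ge, le_INR; lia).
    apply Hle; auto.
  - rewrite Rabs_right by (apply Rge_minus, Rle_ge, le_INR; lia).
    apply Hle; auto using wdist_sym.
Qed.

Lemma walk_vertex_inj (a b : nat) : (a <= L)%nat -> (b <= L)%nat -> w a = w b -> a = b.
Proof.
  intros Ha Hb Hab.
  pose proof (walk_vertex_dist_lower a b 0 Ha Hb) as H.
  rewrite Hab in H. specialize (H (wdist_refl gens (w b))).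
  apply INR_eq. revert H. simpl. unfold Rabs. destruct Rcase_abs; lra.
Qed.

Lemma walk_cand_lower (s s' c : R) : 0 <= s <= INR L -> 0 <= s' <= INR L ->
  cand G gens (walk w s) (walk w s') c -> Rabs (s - s') <= c.
Proof.
  intros Hs Hs' Hc.
  destruct (cand_walk_inv gens w w L L s s' c Hs Hs' Hc) as
    [(k & k' & Hk & Hk' & Hsk & Hsk' & [(Hw & _ & ->) | (Hw & Hw')])
    | (i & j & d & Hi & Hj & Hd & ->)].
  - apply walk_vertex_inj in Hw; try lia. subst k'.
    replace (s - INR k - (s' - INR k)) with (s - s') by ring. lra.
  - apply walk_vertex_inj in Hw; apply walk_vertex_inj in Hw'; lia.
  - pose proof (walk_vertex_dist_lower i j d Hi Hj Hd) as Hij. revert Hij.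
    unfold Rabs. repeat destruct Rcase_abs; lra.
Qed.

Lemma walk_cand_exact (s s' : R) : 0 <= s <= INR L -> 0 <= s' <= INR L ->
  cand G gens (walk w s) (walk w s') (Rabs (s - s')).
Proof.
  assert (Hle : forall s s', 0 <= s <= s' -> s' <= INR L ->
            cand G gens (walk w s) (walk w s') (s' - s)).
  { intros t t' Ht Ht'.
    pose proof (nfloor_spec t' ltac:(lra)) as Hfl.
    set (j := nfloor t') in *.
    destruct (endp_walk_ceil w t (proj1 Ht)) as (i & Hi & Hti).
    destruct (le_lt_dec i j) as [Hij | Hji].
    - right. exists (w i), (INR i - t), (w j), (t' - INR j), (j - i)%nat.
      split; [exact Hti|]. split; [apply endp_walk_floor; lra|].
      split; [apply walk_wdist; split; [exact Hij | apply INR_le; lra]|].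
      rewrite minus_INR by exact Hij. ring.
    - apply le_INR in Hji. rewrite S_INR in Hji.
      left. exists (w j), (w (S j)), (t - INR j), (w j), (w (S j)), (t' - INR j).
      rewrite !(walk_in_edge w j) by lra.
      split; [reflexivity|]. split; [reflexivity|].
      left. repeat split. rewrite Rabs_left1; lra. }
  intros Hs Hs'. destruct (Rle_dec s s').
  - rewrite Rabs_minus_sym, Rabs_right by lra. apply Hle; lra.
  - rewrite Rabs_right by lra. apply cand_sym, Hle; lra.
Qed.

Lemma walk_geodesic : geodesic G gens (walk w) (INR L) (V G (w 0%nat)) (V G (w L)).
Proof.
  split; [apply pos_INR|]. split.
  { intros s Hs. destruct (walk_cases w s (proj1 Hs)) as [[_ ->] | [He ->]]; simpl.
    - exact I.
    - split; [apply walk_adjacent, INR_lt; lra | lra]. }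
  split; [change (walk w 0) with (walk w (INR 0)); rewrite walk_INR; apply pdist_V_refl|].
  split; [rewrite walk_INR; apply pdist_V_refl|].
  intros s s' Hs Hs'. split.
  - apply walk_cand_exact; assumption.
  - intros c. apply walk_cand_lower; assumption.
Qed.

End WalkGeodesic.

Section Cycle.
Context {G : group}.

Definition cycle_vertex (l : list G) (k : nat) : G := gprod G (firstn k l).

Definition cycle_arc (l : list G) (lo k : nat) : G := cycle_vertex l (lo + k).

Lemma cycle_vertex_mul_slice (l : list G) (k j : nat) :
  (k <= j)%nat -> (k <= length l)%nat ->
  gmul G (cycle_vertex l k) (gprod G (firstn (j - k) (skipn k l))) = cycle_vertex l j.
Proof.
  intros Hkj Hk. unfold cycle_vertex. rewrite <- gprod_app.
  rewrite <- (firstn_skipn k l) at 3.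
  rewrite firstn_app, firstn_firstn, firstn_length_le by exact Hk.
  do 3 f_equal. lia.
Qed.

Context (gens : list G).

Lemma cycle_slice (l : list G) (k j : nat) :
  Forall (Spm G gens) l -> (k <= j <= length l)%nat ->
  exists p, length p = (j - k)%nat /\ Forall (Spm G gens) p /\
    gmul G (cycle_vertex l k) (gprod G p) = cycle_vertex l j.
Proof.
  intros Hl Hkj. exists (firstn (j - k) (skipn k l)).
  split; [apply firstn_length_le; rewrite length_skipn; lia|].
  split; [|apply cycle_vertex_mul_slice; lia].
  rewrite <- (firstn_skipn k l), Forall_app in Hl.
  rewrite <- (firstn_skipn (j - k) (skipn k l)), Forall_app in Hl.
  tauto.
Qed.

Lemma cycle_vertex_adjacent (l : list G) (k : nat) :
  Forall (Spm G gens) l -> (k < length l)%nat ->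
  Spm G gens (gmul G (ginv G (cycle_vertex l k)) (cycle_vertex l (S k))).
Proof.
  intros Hl Hk.
  destruct (cycle_slice l k (S k) Hl ltac:(lia)) as (p & Hp & Hsp & <-).
  rewrite Nat.sub_succ_l, Nat.sub_diag in Hp by lia.
  destruct p as [|s [|]]; try discriminate.
  rewrite gmulA, gmulVl, gmul1l. unfold gprod. simpl. rewrite gmul1r.
  inversion Hsp. assumption.
Qed.

Lemma cycle_vertex_length (l : list G) :
  simple_rel G gens l -> cycle_vertex l (length l) = gone G.
Proof. intros (_ & _ & Hl & _). unfold cycle_vertex. rewrite firstn_all. exact Hl. Qed.

End Cycle.

Definition chord {G : group} (gens l : list G) (i j : nat) : Prop :=
  exists l' : list G, Forall (Spm G gens) l' /\
    gprod G (seg G l i j) = gprod G l' /\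
    (length l' + i <= j)%nat /\ (length l' + 2 + j <= length l + i)%nat.

Section ChordFreeStart.
Context {G : group} (gens l : list G) (m : nat).
Hypothesis l_simple : simple_rel G gens l.
Hypothesis no_early_chord : forall i j,
  (1 <= i <= S m)%nat -> (i < j <= length l)%nat -> ~ chord gens l i j.

Lemma cycle_word_lower (x y : nat) (p : list G) :
  (x <= m)%nat -> (x <= y <= length l)%nat -> Forall (Spm G gens) p ->
  gmul G (cycle_vertex l x) (gprod G p) = cycle_vertex l y ->
  (Nat.min (y - x) (length l - (y - x)) <= length p)%nat.
Proof.
  intros Hx Hxy Hp Hv. pose proof l_simple as (_ & Hl & _).
  destruct (Nat.eq_dec y (S x)) as [-> | Hne].
  - destruct p as [|s p]; [exfalso | cbn [length]; lia].
    apply (proj2 (cycle_vertex_adjacent gens l x Hl ltac:(lia))).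
    rewrite <- Hv. unfold gprod. simpl. rewrite gmul1r, gmulVl. reflexivity.
  - destruct (Nat.le_gt_cases (Nat.min (y - x) (length l - (y - x))) (length p))
      as [Hlong | Hshort]; [exact Hlong | exfalso].
    apply (no_early_chord (S x) y); [lia | lia |].
    exists p. split; [exact Hp|]. split; [|lia].
    apply (gmul_cancel_l (cycle_vertex l x)). rewrite Hv. unfold seg.
    replace (y - S x + 1)%nat with (y - x)%nat by lia. rewrite Nat.sub_1_r.
    apply cycle_vertex_mul_slice; lia.
Qed.

Lemma cycle_vertex_inj (x y : nat) : (x <= m)%nat -> (x <= y <= length l)%nat ->
  cycle_vertex l x = cycle_vertex l y -> y = x \/ (x = 0 /\ y = length l)%nat.
Proof.
  intros Hx Hxy Hv.
  assert (H := cycle_word_lower x y nil Hx Hxy (Forall_nil _)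
                 ltac:(rewrite <- Hv; apply gmul1r)).
  simpl in H. lia.
Qed.

Lemma cycle_arc_word_lower (lo hi p q : nat) (w : list G) :
  (lo <= m \/ hi = length l)%nat -> (lo <= p <= q)%nat -> (q <= hi <= length l)%nat ->
  (2 * (hi - lo) <= length l)%nat -> Forall (Spm G gens) w ->
  gmul G (cycle_vertex l p) (gprod G w) = cycle_vertex l q -> (q - p <= length w)%nat.
Proof.
  intros Hanchor Hpq Hq Hshort Hw Hv. pose proof l_simple as (_ & Hl & _).
  destruct Hanchor as [Hlo | ->].
  - destruct (cycle_slice gens l lo p Hl ltac:(lia)) as (u & Hu & Hsu & Hvu).
    assert (Hlow : (Nat.min (q - lo) (length l - (q - lo)) <= length (u ++ w))%nat).
    { apply cycle_word_lower; [lia | lia | apply Forall_app; auto |].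
      rewrite gprod_app, gmulA, Hvu. exact Hv. }
    rewrite length_app in Hlow. lia.
  - destruct (cycle_slice gens l q (length l) Hl ltac:(lia)) as (u & Hu & Hsu & Hvu).
    rewrite (cycle_vertex_length gens l l_simple) in Hvu.
    assert (Hlow : (Nat.min (p - 0) (length l - (p - 0)) <= length (winv (w ++ u)))%nat).
    { apply cycle_word_lower; [lia | lia | apply Forall_Spm_winv, Forall_app; auto |].
      apply gmul_winv. rewrite gprod_app, gmulA, Hv. exact Hvu. }
    rewrite length_winv, length_app in Hlow. lia.
Qed.

Lemma cycle_arc_geodesic (lo hi : nat) :
  (lo <= m \/ hi = length l)%nat -> (lo <= hi <= length l)%nat ->
  (2 * (hi - lo) <= length l)%nat ->
  geodesic G gens (walk (cycle_arc l lo)) (INR (hi - lo))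
    (V G (cycle_vertex l lo)) (V G (cycle_vertex l hi)).
Proof.
  intros Hanchor Hlohi Hshort. pose proof l_simple as (_ & Hl & _).
  replace (cycle_vertex l lo) with (cycle_arc l lo 0)
    by (unfold cycle_arc; rewrite Nat.add_0_r; reflexivity).
  replace (cycle_vertex l hi) with (cycle_arc l lo (hi - lo))
    by (unfold cycle_arc; f_equal; lia).
  apply walk_geodesic.
  - intros k Hk. unfold cycle_arc. rewrite Nat.add_succ_r.
    apply cycle_vertex_adjacent; [exact Hl | lia].
  - intros a b Hab. unfold cycle_arc. split.
    + destruct (cycle_slice gens l (lo + a) (lo + b) Hl ltac:(lia)) as (p & Hp & Hsp & Hv).
      exists p. split; [lia | auto].
    + intros p Hp Hv.
      replace (b - a)%nat with (lo + b - (lo + a))%nat by lia.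
      apply (cycle_arc_word_lower lo hi); auto; lia.
Qed.

Lemma cycle_far (s : R) (lo hi : nat) (s' c : R) :
  0 <= s <= INR m -> (m <= lo <= hi)%nat -> (hi <= length l)%nat ->
  0 <= s' <= INR (hi - lo) ->
  cand G gens (walk (cycle_arc l 0) s) (walk (cycle_arc l lo) s') c ->
  Rmin s (INR m - s) <= c.
Proof.
  intros Hs Hlohi Hhi Hs' Hc. pose proof l_simple as (Hn & _).
  destruct (cand_walk_inv gens _ _ m (hi - lo) s s' c Hs Hs' Hc) as
    [(k & k' & Hk & Hk' & _ & _ & [(Hv & _) | (Hv & Hv')])
    | (i & j & d & Hi & Hj & [(p & <- & Hp & Hv) _] & ->)];
    unfold cycle_arc in *; simpl in *.
  - apply cycle_vertex_inj in Hv; lia.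
  - apply cycle_vertex_inj in Hv; apply cycle_vertex_inj in Hv'; lia.
  - assert (Hlow := cycle_word_lower i (lo + j) p Hi ltac:(lia) Hp Hv).
    assert (Hcases : (lo + j <= length p + i \/ length l + i <= length p + (lo + j))%nat)
      by lia.
    assert (INR m <= INR (lo + j) <= INR (length l)) by (split; apply le_INR; lia).
    pose proof (Rmin_l s (INR m - s)). pose proof (Rmin_r s (INR m - s)).
    pose proof (Rle_abs (s - INR i)). pose proof (Rle_abs (- (s - INR i))).
    rewrite Rabs_Ropp in *. pose proof (Rabs_pos (s' - INR j)).
    destruct Hcases as [Hcase | Hcase]; apply le_INR in Hcase; rewrite !plus_INR in *; lra.
Qed.

End ChordFreeStart.

Lemma hyperbolic_delta_nonneg (G : group) (gens : list G) (delta : R) :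
  hyperbolic G gens delta -> 0 <= delta.
Proof.
  intro Hhyp. set (o := V G (gone G)).
  assert (Hgeo : geodesic G gens (fun _ => o) 0 o o).
  { split; [lra|]. split; [intros; exact I|].
    split; [apply pdist_V_refl|]. split; [apply pdist_V_refl|].
    intros s s' Hs Hs'. replace (Rabs (s - s')) with 0.
    - apply pdist_V_refl.
    - replace s with 0 by lra. replace s' with 0 by lra.
      rewrite Rminus_diag, Rabs_R0. reflexivity. }
  destruct (Hhyp o o o _ _ _ _ _ _ I I I Hgeo Hgeo Hgeo) as [Hthin _].
  destruct (Hthin 0 ltac:(lra))
    as [(_ & _ & r & [Hr _] & Hrd) | (_ & _ & r & [Hr _] & Hrd)];
    pose proof (proj2 (pdist_V_refl gens (gone G)) r Hr); lra.
Qed.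

Lemma hyperbolic_early_chord (G : group) (gens : list G) (delta : R) (l : list G) (m : nat) :
  hyperbolic G gens delta -> simple_rel G gens l ->
  2 * delta < INR m -> (2 * m < length l)%nat ->
  exists i j, (1 <= i <= S m)%nat /\ (i < j <= length l)%nat /\ chord gens l i j.
Proof.
  intros Hhyp Hl Hm Hn. apply NNPP. intro Hno.
  assert (no_early_chord : forall i j, (1 <= i <= S m)%nat ->
            (i < j <= length l)%nat -> ~ chord gens l i j)
    by (intros i j Hi Hj Hc; apply Hno; exists i, j; auto).
  pose proof (hyperbolic_delta_nonneg G gens delta Hhyp).
  assert (Hm0 : (0 < m)%nat) by (apply INR_lt; simpl; lra).
  assert (Hc : exists c, (length l <= 2 * c <= S (length l))%nat)
    by (destruct (Nat.Even_or_Odd (length l)) as [[c Hc] | [c Hc]];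
        [exists c | exists (S c)]; lia).
  destruct Hc as [c Hc].
  assert (G1 := cycle_arc_geodesic gens l m Hl no_early_chord 0 m
                  ltac:(lia) ltac:(lia) ltac:(lia)).
  assert (G2 := cycle_arc_geodesic gens l m Hl no_early_chord m c
                  ltac:(lia) ltac:(lia) ltac:(lia)).
  assert (G3 := cycle_arc_geodesic gens l m Hl no_early_chord c (length l)
                  ltac:(lia) ltac:(lia) ltac:(lia)).
  rewrite Nat.sub_0_r in G1. rewrite (cycle_vertex_length gens l Hl) in G3.
  destruct (Hhyp (V G (cycle_vertex l 0)) (V G (cycle_vertex l m)) (V G (cycle_vertex l c))
              _ _ _ _ _ _ I I I G1 G2 G3) as [Hthin _].
  assert (Hfar : forall lo hi s' r, (m <= lo <= hi)%nat -> (hi <= length l)%nat ->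
            0 <= s' <= INR (hi - lo) ->
            pdist G gens (walk (cycle_arc l 0) (INR m / 2)) (walk (cycle_arc l lo) s') r ->
            delta < r).
  { intros lo hi s' r Hlohi Hhi Hs' [Hr _].
    assert (Hmin := cycle_far gens l m Hl no_early_chord (INR m / 2) lo hi s' r
                      ltac:(lra) Hlohi Hhi Hs' Hr).
    revert Hmin. unfold Rmin. destruct Rle_dec; lra. }
  destruct (Hthin (INR m / 2) ltac:(lra))
    as [(s' & Hs' & r & Hr & Hrd) | (s' & Hs' & r & Hr & Hrd)].
  - pose proof (Hfar m c s' r ltac:(lia) ltac:(lia) Hs' Hr). lra.
  - pose proof (Hfar c (length l) s' r ltac:(lia) ltac:(lia) Hs' Hr). lra.
Qed.

Theorem corollary5 (G : group) (S : list G) (delta : R) :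
  generates G S ->
  hyperbolic G S delta ->
  chordal G S (4 * delta + 2) (4 * delta + 3).
Proof.
  intros _ Hhyp l Hl Hlen.
  pose proof (hyperbolic_delta_nonneg G S delta Hhyp) as Hdelta.
  pose proof (nfloor_spec (2 * delta) ltac:(lra)) as Hfl.
  set (m := Datatypes.S (nfloor (2 * delta))).
  assert (Hm : INR m = INR (nfloor (2 * delta)) + 1) by apply S_INR.
  destruct (hyperbolic_early_chord G S delta l m Hhyp Hl) as (i & j & Hi & Hj & Hc).
  - lra.
  - apply INR_lt. rewrite mult_INR, Hm. replace (INR 2) with 2 by (simpl; ring). lra.
  - exists i, j. split; [lia|]. split.
    + assert (Him := le_INR i (Datatypes.S m) ltac:(lia)). rewrite S_INR in Him. lra.
    + split; [lia|]. split; [lia|]. exact Hc.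
Qed.
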